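(* In the setting of the context, for every $\mu\in U$ such that $(\Phi,\mu)$ has no singular connection, every periodic point of $f_\mu$ is regular.
   Context: Let $N\ge2$, $\lambda\in(0,1)$, and $\varphi_1,\dots,\varphi_N\colon[0,1]\to[0,1]$ bi-Lipschitz with Lipschitz constant $\le\lambda$, $\Phi=\{\varphi_i\}$, and assume $\varphi_i([0,1])\subset(0,1)$ for every $i$. Let $U=\{\mu=(\mu_1,\dots,\mu_{N-1}):0<\mu_1<\cdots<\mu_{N-1}<1\}$, $\mu_0=0$, $\mu_N=1$. For $\mu\in U$, $f_\mu\colon[0,1]\to[0,1]$ satisfies $f_\mu=\varphi_i$ on $A_{i,\mu}=(\mu_{i-1},\mu_i)$, $i=1,\dots,N$, and at each point of the singular set $S_\mu=\{0,\mu_1,\dots,\mu_{N-1},1\}$, $f_\mu$ is either left continuous or right continuous. A point is regular if its forward $f_\mu$-orbit never meets $S_\mu$. For $\alpha=(i_0,\dots,i_{n-1})$, $\varphi^\alpha=\varphi_{i_{n-1}}\circ\cdots\circ\varphi_{i_0}$; $(\Phi,\mu)$ has a singular connection if $\varphi^\alpha(\mu_i)=\mu_j$ for some $n\ge1$, $\alpha\in\{1,\dots,N\}^n$, $i,j\in\{1,\dots,N-1\}$. *)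

From Stdlib Require Import Reals Lra Lia List.
Open Scope R_scope.

Definition in01 (x : R) : Prop := 0 <= x <= 1.

Definition bilip_le (lam : R) (phi : R -> R) : Prop :=
  (forall x, in01 x -> in01 (phi x)) /\
  (forall x y, in01 x -> in01 y -> Rabs (phi x - phi y) <= lam * Rabs (x - y)) /\
  (exists c, 0 < c /\
     forall x y, in01 x -> in01 y -> c * Rabs (x - y) <= Rabs (phi x - phi y)).

Definition left_cont_at (f : R -> R) (s : R) : Prop :=
  forall eps, 0 < eps -> exists delta, 0 < delta /\
    forall y, in01 y -> s - delta < y <= s -> Rabs (f y - f s) < eps.

Definition right_cont_at (f : R -> R) (s : R) : Prop :=
  forall eps, 0 < eps -> exists delta, 0 < delta /\
    forall y, in01 y -> s <= y < s + delta -> Rabs (f y - f s) < eps.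

(* mu : nat -> R encodes (mu_0, mu_1, ..., mu_N) with mu_0 = 0, mu_N = 1,
   and (mu_1, ..., mu_{N-1}) in U; values of mu beyond N are irrelevant. *)
Definition in_U (N : nat) (mu : nat -> R) : Prop :=
  mu 0%nat = 0 /\ mu N = 1 /\ (forall i, (i < N)%nat -> mu i < mu (S i)).

Definition singular_set (N : nat) (mu : nat -> R) (x : R) : Prop :=
  exists i, (i <= N)%nat /\ x = mu i.

Definition is_f_mu (N : nat) (phi : nat -> R -> R) (mu : nat -> R)
    (f : R -> R) : Prop :=
  (forall x, in01 x -> in01 (f x)) /\
  (forall i x, (1 <= i <= N)%nat -> mu (pred i) < x < mu i -> f x = phi i x) /\
  (forall i, (1 <= i <= N - 1)%nat -> left_cont_at f (mu i) \/ right_cont_at f (mu i)) /\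
  (* endpoints: the only non-vacuous one-sided continuity *)
  right_cont_at f 0 /\ left_cont_at f 1.

(* phi^alpha = phi_{i_{n-1}} o ... o phi_{i_0} for alpha = [i_0; ...; i_{n-1}] *)
Definition phi_word (phi : nat -> R -> R) (alpha : list nat) (x : R) : R :=
  fold_left (fun y k => phi k y) alpha x.

Definition singular_connection (N : nat) (phi : nat -> R -> R) (mu : nat -> R) : Prop :=
  exists (alpha : list nat) (i j : nat),
    (1 <= length alpha)%nat /\
    (forall k, In k alpha -> (1 <= k <= N)%nat) /\
    (1 <= i <= N - 1)%nat /\ (1 <= j <= N - 1)%nat /\
    phi_word phi alpha (mu i) = mu j.

Definition regular_point (N : nat) (mu : nat -> R) (f : R -> R) (x : R) : Prop :=
  forall k : nat, ~ singular_set N mu (Nat.iter k f x).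

Definition periodic_point (f : R -> R) (x : R) : Prop :=
  in01 x /\ exists n : nat, (1 <= n)%nat /\ Nat.iter n f x = x.

(* Branches are Lipschitz, hence continuous, and one-sided limits are unique, so
   the one-sided continuity of f at a singular point forces f to agree there with
   the adjacent branch.  Thus f = phi_j pointwise for some j, and every orbit
   segment of f is a word in Phi; in particular f maps [0,1] into (0,1), so a
   periodic orbit avoids 0 and 1.  If such an orbit passed through mu_i, going
   once around it would give phi^alpha (mu_i) = mu_i, a singular connection. *)
From Stdlib Require Import Reals Lra Lia List.
Open Scope R_scope.

Lemma lipschitz_cont_at (L : R) (g : R -> R) (b : R) :
  0 < L -> in01 b ->
  (forall x y, in01 x -> in01 y -> Rabs (g x - g y) <= L * Rabs (x - y)) ->
  forall eps, 0 < eps -> exists delta, 0 < delta /\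
    forall y, in01 y -> Rabs (y - b) < delta -> Rabs (g y - g b) < eps.
Proof.
  intros HL Hb Hlip eps Heps.
  exists (eps / L). split; [apply Rdiv_lt_0_compat; lra |].
  intros y Hy Hyb.
  apply Rle_lt_trans with (L * Rabs (y - b)); [now apply Hlip |].
  replace eps with (L * (eps / L)) by (field; lra).
  now apply Rmult_lt_compat_l.
Qed.

Lemma lipschitz_left_right_cont (L : R) (g : R -> R) (b : R) :
  0 < L -> in01 b ->
  (forall x y, in01 x -> in01 y -> Rabs (g x - g y) <= L * Rabs (x - y)) ->
  left_cont_at g b /\ right_cont_at g b.
Proof.
  intros HL Hb Hlip.
  split; intros eps Heps;
    destruct (lipschitz_cont_at L g b HL Hb Hlip eps Heps) as [delta [Hdelta Hcont]];
    exists delta; split; auto; intros y Hy Hyb;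
    apply Hcont; auto; apply Rabs_def1; lra.
Qed.

Lemma exists_pos_below3 (a b c : R) :
  0 < a -> 0 < b -> 0 < c -> exists t, 0 < t /\ t < a /\ t < b /\ t < c.
Proof.
  intros Ha Hb Hc. exists (Rmin (Rmin a b) c / 2).
  assert (0 < Rmin (Rmin a b) c) by (repeat apply Rmin_pos; assumption).
  pose proof (Rmin_l (Rmin a b) c). pose proof (Rmin_r (Rmin a b) c).
  pose proof (Rmin_l a b). pose proof (Rmin_r a b). lra.
Qed.

Lemma left_cont_at_unique (f g : R -> R) (a b : R) :
  0 <= a < b -> b <= 1 ->
  (forall y, a < y < b -> f y = g y) ->
  left_cont_at f b -> left_cont_at g b -> f b = g b.
Proof.
  intros Ha Hb Hfg Hf Hg. apply cond_eq. intros eps Heps.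
  destruct (Hf (eps / 2) ltac:(lra)) as [df [Hdf Hf']].
  destruct (Hg (eps / 2) ltac:(lra)) as [dg [Hdg Hg']].
  destruct (exists_pos_below3 df dg (b - a)) as [t Ht]; [lra .. |].
  assert (Hy : in01 (b - t)) by (unfold in01; lra).
  specialize (Hf' (b - t) Hy ltac:(lra)). specialize (Hg' (b - t) Hy ltac:(lra)).
  rewrite Hfg in Hf' by lra.
  replace (f b - g b) with (- (g (b - t) - f b) + (g (b - t) - g b)) by ring.
  eapply Rle_lt_trans; [apply Rabs_triang |]. rewrite Rabs_Ropp. lra.
Qed.

Lemma right_cont_at_unique (f g : R -> R) (a b : R) :
  0 <= a < b -> b <= 1 ->
  (forall y, a < y < b -> f y = g y) ->
  right_cont_at f a -> right_cont_at g a -> f a = g a.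
Proof.
  intros Ha Hb Hfg Hf Hg. apply cond_eq. intros eps Heps.
  destruct (Hf (eps / 2) ltac:(lra)) as [df [Hdf Hf']].
  destruct (Hg (eps / 2) ltac:(lra)) as [dg [Hdg Hg']].
  destruct (exists_pos_below3 df dg (b - a)) as [t Ht]; [lra .. |].
  assert (Hy : in01 (a + t)) by (unfold in01; lra).
  specialize (Hf' (a + t) Hy ltac:(lra)). specialize (Hg' (a + t) Hy ltac:(lra)).
  rewrite Hfg in Hf' by lra.
  replace (f a - g a) with (- (g (a + t) - f a) + (g (a + t) - g a)) by ring.
  eapply Rle_lt_trans; [apply Rabs_triang |]. rewrite Rabs_Ropp. lra.
Qed.

Lemma partition_by_points (mu : nat -> R) (k : nat) (y : R) :
  mu 0%nat <= y <= mu k ->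
  (exists i, (i <= k)%nat /\ y = mu i) \/
  (exists i, (i < k)%nat /\ mu i < y < mu (S i)).
Proof.
  revert y. induction k as [| k IHk]; intros y Hy.
  - left. exists 0%nat. split; [lia | lra].
  - destruct (Rle_lt_dec y (mu k)) as [Hle | Hlt].
    + destruct (IHk y ltac:(lra)) as [[i [Hi Hyi]] | [i [Hi Hyi]]].
      * left. exists i. split; [lia | exact Hyi].
      * right. exists i. split; [lia | exact Hyi].
    + destruct (Req_dec y (mu (S k))) as [Heq | Hne].
      * left. exists (S k). split; [lia | exact Heq].
      * right. exists k. split; [lia | lra].
Qed.

Lemma in_U_N_pos (N : nat) (mu : nat -> R) : in_U N mu -> (0 < N)%nat.
Proof.
  intros [H0 [HN _]]. destruct N; [rewrite H0 in HN; lra | lia].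
Qed.

Lemma in_U_lt (N : nat) (mu : nat -> R) :
  in_U N mu -> forall i j, (i < j <= N)%nat -> mu i < mu j.
Proof.
  intros [_ [_ Hstep]] i j Hij. induction j as [| j IHj]; [lia |].
  destruct (Nat.eq_dec i j) as [-> | Hne]; [apply Hstep; lia |].
  specialize (Hstep j ltac:(lia)). specialize (IHj ltac:(lia)). lra.
Qed.

Lemma in_U_in01 (N : nat) (mu : nat -> R) :
  in_U N mu -> forall i, (i <= N)%nat -> in01 (mu i).
Proof.
  intros HU i Hi. pose proof HU as [H0 [HN _]]. unfold in01.
  destruct (Nat.eq_dec i 0) as [-> | Hi0]; [lra |].
  destruct (Nat.eq_dec i N) as [-> | HiN]; [lra |].
  pose proof (in_U_lt N mu HU 0 i ltac:(lia)).
  pose proof (in_U_lt N mu HU i N ltac:(lia)). lra.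
Qed.

Section Branches.

Variables (N : nat) (phi : nat -> R -> R) (mu : nat -> R) (f : R -> R).
Hypothesis phi_cont :
  forall i b, (1 <= i <= N)%nat -> in01 b ->
  left_cont_at (phi i) b /\ right_cont_at (phi i) b.
Hypothesis mu_U : in_U N mu.
Hypothesis f_mu : is_f_mu N phi mu f.

Lemma f_mu_left (i : nat) :
  (1 <= i <= N)%nat -> left_cont_at f (mu i) -> f (mu i) = phi i (mu i).
Proof.
  intros Hi Hleft. destruct f_mu as [_ [Hbranch _]].
  pose proof (in_U_lt N mu mu_U (pred i) i ltac:(lia)).
  pose proof (in_U_in01 N mu mu_U (pred i) ltac:(lia)) as [? _].
  pose proof (in_U_in01 N mu mu_U i ltac:(lia)) as Hmi.
  apply (left_cont_at_unique f (phi i) (mu (pred i))).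
  - split; assumption.
  - apply Hmi.
  - intros y Hy. apply Hbranch; [exact Hi | exact Hy].
  - exact Hleft.
  - apply phi_cont; [exact Hi | exact Hmi].
Qed.

Lemma f_mu_right (i : nat) :
  (i < N)%nat -> right_cont_at f (mu i) -> f (mu i) = phi (S i) (mu i).
Proof.
  intros Hi Hright. destruct f_mu as [_ [Hbranch _]].
  pose proof (in_U_lt N mu mu_U i (S i) ltac:(lia)).
  pose proof (in_U_in01 N mu mu_U i ltac:(lia)) as Hmi.
  pose proof (in_U_in01 N mu mu_U (S i) ltac:(lia)) as [_ ?].
  apply (right_cont_at_unique f (phi (S i)) (mu i) (mu (S i))).
  - split; [apply Hmi | assumption].
  - assumption.
  - intros y Hy. apply (Hbranch (S i)); [lia | exact Hy].
  - exact Hright.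
  - apply phi_cont; [lia | exact Hmi].
Qed.

Lemma f_mu_branch (y : R) :
  in01 y -> exists j, (1 <= j <= N)%nat /\ f y = phi j y.
Proof.
  intros Hy. pose proof mu_U as [H0 [HN _]]. pose proof (in_U_N_pos N mu mu_U).
  destruct f_mu as (_ & Hbranch & Hsing & Hright0 & Hleft1).
  destruct (partition_by_points mu N y ltac:(unfold in01 in Hy; lra))
    as [[i [Hi ->]] | [i [Hi Hyi]]].
  - destruct (Nat.eq_dec i 0) as [-> | Hi0].
    + exists 1%nat. split; [lia |]. apply f_mu_right; [lia | now rewrite H0].
    + destruct (Nat.eq_dec i N) as [-> | HiN].
      * exists N. split; [lia |]. apply f_mu_left; [lia | now rewrite HN].
      * destruct (Hsing i ltac:(lia)) as [Hleft | Hright].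
        -- exists i. split; [lia |]. now apply f_mu_left; [lia |].
        -- exists (S i). split; [lia |]. now apply f_mu_right; [lia |].
  - exists (S i). split; [lia |]. apply Hbranch; [lia | exact Hyi].
Qed.

End Branches.

Lemma iter_phi_word (P : nat -> Prop) (phi : nat -> R -> R) (f : R -> R) :
  (forall y, in01 y -> in01 (f y)) ->
  (forall y, in01 y -> exists j, P j /\ f y = phi j y) ->
  forall m y, in01 y -> exists alpha, length alpha = m /\
    (forall k, In k alpha -> P k) /\ Nat.iter m f y = phi_word phi alpha y.
Proof.
  intros Hf01 Hbranch m y Hy. induction m as [| m IHm].
  - exists nil. repeat split. intros k [].
  - destruct IHm as [alpha [Hlen [Hletters Hword]]].
    destruct (Hbranch (Nat.iter m f y)) as [j [Hj Hfj]];
      [now apply Nat.iter_invariant |].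
    exists (alpha ++ j :: nil). repeat split.
    + rewrite length_app. simpl. lia.
    + intros k Hk. apply in_app_or in Hk. destruct Hk as [Hk | [<- | []]]; auto.
    + rewrite Nat.iter_succ, Hfj, Hword. unfold phi_word. now rewrite fold_left_app.
Qed.

Lemma periodic_point_iter (f : R -> R) (x : R) (k : nat) :
  (forall y, in01 y -> in01 (f y)) ->
  periodic_point f x -> periodic_point f (Nat.iter k f x).
Proof.
  intros Hf01 [Hx [n [Hn Hper]]]. split; [now apply Nat.iter_invariant |].
  exists n. split; [exact Hn |].
  rewrite <- Nat.iter_add, Nat.add_comm, Nat.iter_add, Hper. reflexivity.
Qed.

Lemma periodic_point_interior (f : R -> R) (x : R) :
  (forall y, in01 y -> 0 < f y < 1) -> periodic_point f x -> 0 < x < 1.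
Proof.
  intros Hf [Hx [n [Hn Hper]]]. destruct n as [| n]; [lia |].
  rewrite <- Hper, Nat.iter_succ. apply Hf.
  apply Nat.iter_invariant; [| exact Hx].
  intros y Hy. specialize (Hf y Hy). unfold in01. lra.
Qed.

Theorem lemma4p4 (N : nat) (lam : R) (phi : nat -> R -> R) :
  (2 <= N)%nat ->
  0 < lam < 1 ->
  (forall i, (1 <= i <= N)%nat -> bilip_le lam (phi i)) ->
  (forall i x, (1 <= i <= N)%nat -> in01 x -> 0 < phi i x < 1) ->
  forall (mu : nat -> R), in_U N mu ->
  ~ singular_connection N phi mu ->
  forall f : R -> R, is_f_mu N phi mu f ->
  forall x, periodic_point f x -> regular_point N mu f x.
Proof.
  intros _ Hlam Hbilip Hphi01 mu HU Hnoconn f Hf x Hx k [i [Hi Hsing]].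
  pose proof HU as [H0 [HN _]]. pose proof Hf as [Hf01 _].
  assert (Hbranch : forall y, in01 y -> exists j, (1 <= j <= N)%nat /\ f y = phi j y).
  { apply f_mu_branch with mu; [| exact HU | exact Hf].
    intros j b Hj Hb. destruct (Hbilip j Hj) as [_ [Hlip _]].
    apply (lipschitz_left_right_cont lam); [lra | exact Hb | exact Hlip]. }
  assert (Hinterior : forall y, in01 y -> 0 < f y < 1).
  { intros y Hy. destruct (Hbranch y Hy) as [j [Hj ->]]. now apply Hphi01. }
  pose proof (periodic_point_iter f x k Hf01 Hx) as Hz.
  pose proof (periodic_point_interior f _ Hinterior Hz) as Hz01.
  destruct Hz as [Hzin [n [Hn Hper]]].
  destruct (iter_phi_word _ phi f Hf01 Hbranch n _ Hzin) as [alpha [Hlen [Hletters Hword]]].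
  assert (i <> 0%nat) by (intros ->; lra).
  assert (i <> N) by (intros ->; lra).
  apply Hnoconn. exists alpha, i, i.
  split; [lia |]. split; [exact Hletters |].
  split; [lia |]. split; [lia |].
  rewrite <- Hsing, <- Hword. exact Hper.
Qed.
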